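(* For $f\in L^2(\mathbb{S}^1,\mathbb{C})$, identified with a $1$-periodic function on $\mathbb{R}$ via $z=e^{2\pi i\phi}$, define \[ \mathcal{T}f(\phi)=\frac12\Big[f\big(\tfrac{\phi}{2}\big)+f\big(\tfrac{\phi+1}{2}\big)\Big]+\frac{e^{\pi i\phi}}{2}\Big[f\big(\tfrac{3\phi}{2}\big)-f\big(\tfrac{3\phi+1}{2}\big)\Big]. \] Then Lebesgue measure $dx$ on $\mathbb{S}^1\cong[0,1)$ is invariant for $\mathcal{T}$: \[ \int_{\mathbb{S}^1}\mathcal{T}f\,dx=\int_{\mathbb{S}^1}f\,dx\quad\text{for all }f\in L^2(\mathbb{S}^1,\mathbb{C}). \]
   Context: $\mathbb{S}^1$ is the unit circle, parametrized by $\phi\in[0,1)$, and functions on it are identified with $1$-periodic functions on $\mathbb{R}$. This operator is the restriction to the unit circle of the operator $\sum a_nz^n\mapsto\sum a_nz^{T(n)}$, where $T$ is the Collatz map $T(n)=\frac{3n+1}2$ ($n$ odd), $T(n)=\frac n2$ ($n$ even). *)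

From HB Require Import structures.
From mathcomp Require Import all_boot all_order all_algebra.
From mathcomp Require Import all_classical all_reals all_analysis.
From mathcomp Require Import complex.
Set Implicit Arguments. Unset Strict Implicit. Unset Printing Implicit Defensive.
Import Order.TTheory GRing.Theory Num.Theory.
Local Open Scope classical_set_scope.
Local Open Scope ring_scope.

Definition cexpi (R : realType) (t : R) : R[i] := Complex (cos t) (sin t).

Definition L2_circle (R : realType) (f : R -> R[i]) : Prop :=
  (forall x : R, f (x + 1) = f x) /\
  measurable_fun setT (fun x => complex.Re (f x)) /\
  measurable_fun setT (fun x => complex.Im (f x)) /\
  (@lebesgue_measure R).-integrable `[0, 1[
     (fun x => ((complex.Re (f x)) ^+ 2 + (complex.Im (f x)) ^+ 2)%:E).

Definition circle_integral (R : realType) (f : R -> R[i]) : R[i] :=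
  Complex (Rintegral (@lebesgue_measure R) `[0, 1[ (fun x => complex.Re (f x)))
          (Rintegral (@lebesgue_measure R) `[0, 1[ (fun x => complex.Im (f x))).

Definition collatzT (R : realType) (f : R -> R[i]) (phi : R) : R[i] :=
  (Complex (2^-1 : R) 0) * (f (phi / 2) + f ((phi + 1) / 2))
  + (cexpi (pi * phi) * (Complex (2^-1 : R) 0))
      * (f (3 * phi / 2) - f ((3 * phi + 1) / 2)).

From HB Require Import structures.
From mathcomp Require Import all_boot all_order all_algebra.
From mathcomp Require Import all_classical all_reals all_analysis.
From mathcomp Require Import complex.
From mathcomp Require Import lra ring measurable_realfun.
Set Implicit Arguments. Unset Strict Implicit. Unset Printing Implicit Defensive.
Import Order.TTheory GRing.Theory Num.Theory.
Local Open Scope classical_set_scope.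
Local Open Scope ring_scope.

(* For a real 1-periodic g, the even branch g(x/2) + g((x+1)/2) integrates over
   [0,1) to 2 * int g, as the two halves of [0,1) are the images of [0,1) under
   x |-> x/2 and x |-> (x+1)/2. For the odd branch, weighted by c(pi x) with
   c = cos or +-sin, the substitutions y = 3x/2 and y = (3x+1)/2 turn the two
   terms into 2/3 int c(2 pi y/3 + beta) g(y) dy over [0,3/2) with beta = 0 and
   over [1/2,2) with beta = -pi/3. Folding the parts beyond 1 back onto [0,1)
   by periodicity adds 2 pi/3 to beta, and since
   c(y - pi/3) + c(y + pi/3) = c(y), i.e. 2 cos(pi/3) = 1, the two folded
   integrands agree on [0,1/2) and on [1/2,1). Applied to the real and
   imaginary parts of f, this gives int Tf = int f. *)

Section real_valued_integrable.
Context d (T : measurableType d) (R : realType) (mu : {measure set T -> \bar R}).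
Variable D : set T.
Hypothesis mD : measurable D.

Lemma integrableD_EFin (f g : T -> R) :
  mu.-integrable D (EFin \o f) -> mu.-integrable D (EFin \o g) ->
  mu.-integrable D (EFin \o (f \+ g)).
Proof.
by move=> intf intg; apply: eq_integrable (integrableD mD intf intg) => // x _; rewrite /= EFinD.
Qed.

Lemma integrableB_EFin (f g : T -> R) :
  mu.-integrable D (EFin \o f) -> mu.-integrable D (EFin \o g) ->
  mu.-integrable D (EFin \o (f \- g)).
Proof.
by move=> intf intg; apply: eq_integrable (integrableB mD intf intg) => // x _; rewrite /= EFinB.
Qed.

Lemma integrableM_le1 (w h : T -> R) :
  measurable_fun D w -> (forall x, D x -> `|w x| <= 1) ->
  mu.-integrable D (EFin \o h) -> mu.-integrable D (EFin \o (w \* h)).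
Proof.
move=> mw w_le1 ih.
have w_bounded : [bounded w x | x in D].
  exists 1; split; first exact: num_real.
  by move=> M /ltW M_ge1 x Dx; exact: le_trans (w_le1 x Dx) M_ge1.
exact: integrableMr mw w_bounded ih.
Qed.

Lemma integrable_sqr_le (h F : T -> R) :
  (mu D < +oo)%E -> measurable_fun D h ->
  mu.-integrable D (EFin \o F) -> (forall x, D x -> h x ^+ 2 <= F x) ->
  mu.-integrable D (EFin \o h).
Proof.
move=> muD_finite mh iF h2_le_F.
have i1 : mu.-integrable D (EFin \o cst (1 : R)).
  apply/integrableP; split; first exact/measurable_EFinP.
  by under eq_integral do rewrite /= normr1; rewrite integral_cst // mul1e.
apply: le_integrable (integrableD mD i1 iF) => //; first exact/measurable_EFinP.
move=> x Dx; rewrite /= lee_fin [X in _ <= X]ger0_norm; last first.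
  by apply: addr_ge0 => //; apply: le_trans (h2_le_F x Dx); exact: sqr_ge0.
have := h2_le_F x Dx; rewrite -(real_normK (num_real (h x))).
have := sqr_ge0 (`|h x| - 1); nra.
Qed.

End real_valued_integrable.

Section affine_substitution.
Context {R : realType}.
Local Notation mu := (@lebesgue_measure R).
Variables (a b : R).
Hypothesis a_gt0 : 0 < a.
Local Notation affine := (fun x : R => a * x + b).

(* [measurableTypeR R] is the sigma-algebra carrying [lebesgue_measure]; the
   default one on [R] has another display, which unification does not see
   through. *)
Lemma measurable_fun_affine :
  measurable_fun (T:=measurableTypeR R) (U:=measurableTypeR R) setT affine.
Proof. exact: measurable_funD. Qed.

Lemma measurable_affine_preimage (D : set R) :
  measurable D -> @measurable _ (measurableTypeR R) (affine @^-1` D).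
Proof. by move=> mD; have := measurable_fun_affine measurableT mD; rewrite setTI. Qed.

(* The measure instance that HB builds for [pushforward mu affine]. *)
Let affine_image :=
  measure_function_pushforward__canonical__measure_function_Measure
    mu measurable_fun_affine.

Lemma lebesgue_measure_affine (A : set R) :
  measurable A -> mu A = (a%:E * mu (affine @^-1` A))%E.
Proof.
move=> mA.
rewrite (@lebesgue_measure_unique R (mscale (NngNum (ltW a_gt0)) affine_image)) //.
move=> _ [[p q] _ <-].
transitivity (a%:E * mu (affine @^-1` `]p, q]))%E; last by [].
have -> : affine @^-1` `]p, q] = `](p - b) / a, (q - b) / a]%classic.
  by apply/seteqP; split => x /=; rewrite !in_itv/= ltr_pdivrMr// ler_pdivlMr//;
    move=> /andP[? ?]; apply/andP; split; lra.
rewrite !lebesgue_measure_itv/= !lte_fin ltr_pM2r ?invr_gt0// ltrD2r.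
case: ifPn => _; rewrite ?mule0//.
by rewrite -!EFinD -EFinM; congr (_%:E); field; exact: lt0r_neq0.
Qed.

Lemma ge0_integral_affine (D : set R) (G : R -> \bar R) :
  measurable D -> measurable_fun setT G -> (forall x, (0 <= G x)%E) ->
  (\int[mu]_(x in D) G x = a%:E * \int[mu]_(x in affine @^-1` D) G (a * x + b)%R)%E.
Proof.
move=> mD mG G0.
rewrite (@eq_measure_integral _ _ _ _ (mscale (NngNum (ltW a_gt0)) affine_image));
  last by move=> A mA _; exact: lebesgue_measure_affine.
rewrite ge0_integral_mscale //; last exact: measurable_funTS.
by rewrite (ge0_integral_pushforward measurable_fun_affine) //; exact: measurable_funTS.
Qed.

Lemma integrable_affine (D : set R) (g : R -> R) :
  measurable D -> measurable_fun setT g -> mu.-integrable D (EFin \o g) ->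
  mu.-integrable (affine @^-1` D) (EFin \o (fun x => g (a * x + b))).
Proof.
move=> mD mg /integrableP[_ ig]; apply/integrableP; split.
  apply/measurable_EFinP; apply: measurable_funTS; exact: measurableT_comp mg measurable_fun_affine.
rewrite (@ge0_integral_affine _ (fun x => `|g x|%:E)) // in ig;
  last exact/measurable_EFinP/measurableT_comp.
rewrite -(mul1e (\int[mu]_(x in _) _)) -(mulVf (lt0r_neq0 a_gt0)) EFinM -muleA.
by apply: lte_mul_pinfty => //; rewrite lee_fin invr_ge0 ltW.
Qed.

Lemma Rintegral_affine (D : set R) (g : R -> R) :
  measurable D -> measurable_fun setT g -> mu.-integrable D (EFin \o g) ->
  Rintegral mu D g = a * Rintegral mu (affine @^-1` D) (fun x => g (a * x + b)).
Proof.
move=> mD mg ig.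
have mEg : measurable_fun setT (EFin \o g) by exact/measurable_EFinP.
have ig_affine := integrable_affine mD mg ig.
have mpreD := measurable_affine_preimage mD.
rewrite /Rintegral [X in _ = X * _](_ : a = fine a%:E) // -fineM //;
  last exact: integrable_fin_num.
congr fine.
transitivity (a%:E * \int[mu]_(x in affine @^-1` D) ((EFin \o g) \o affine) x)%E; last by [].
rewrite (_ : (\int[mu]_(x in D) (g x)%:E = \int[mu]_(x in D) (EFin \o g) x)%E) //.
rewrite integralE [X in (_ * X)%E]integralE.
rewrite (funepos_comp (EFin \o g) affine) (funeneg_comp (EFin \o g) affine).
rewrite (ge0_integral_affine mD (measurable_funepos mEg)) //.
rewrite (ge0_integral_affine mD (measurable_funeneg mEg)) // -muleBr //.
apply: fin_num_adde_defl; rewrite fin_numN.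
have := integrable_neg_fin_num mpreD ig_affine.
by rewrite (funeneg_comp (EFin \o g) affine).
Qed.

Lemma affine_preimage_itv (c d : R) :
  affine @^-1` `[a * c + b, a * d + b[ = `[c, d[%classic.
Proof.
apply/seteqP; split => x /=; rewrite !in_itv /= lerD2r ltrD2r.
  by rewrite !ler_pM2l ?ltr_pM2l.
by rewrite !ler_pM2l ?ltr_pM2l.
Qed.

Lemma integrable_affine_itv (c d p q : R) (h : R -> R) :
  p = a * c + b -> q = a * d + b -> measurable_fun setT h ->
  mu.-integrable `[p, q[ (EFin \o h) ->
  mu.-integrable `[c, d[ (EFin \o (fun x => h (a * x + b))).
Proof.
move=> -> -> mh ih.
by rewrite -affine_preimage_itv; exact: integrable_affine.
Qed.

Lemma Rintegral_affine_itv (c d p q : R) (h : R -> R) :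
  p = a * c + b -> q = a * d + b -> measurable_fun setT h ->
  mu.-integrable `[p, q[ (EFin \o h) ->
  Rintegral mu `[p, q[ h = a * Rintegral mu `[c, d[ (fun x => h (a * x + b)).
Proof.
move=> -> -> mh ih.
by rewrite -(affine_preimage_itv c d); exact: Rintegral_affine.
Qed.

End affine_substitution.

Section interval_additivity.
Context {R : realType}.
Local Notation mu := (@lebesgue_measure R).
Variables (p q r : R).
Hypotheses (pq : p <= q) (qr : q <= r).

Let itv_setU : `[p, r[%classic = `[p, q[ `|` `[q, r[ :> set R.
Proof. by apply: itv_bndbnd_setU; rewrite bnd_simp. Qed.

Let itv_disjoint : [disjoint `[p, q[%classic & `[q, r[%classic].
Proof.
apply/disj_setPS => x [] /=; rewrite !in_itv /= => /andP[_ xq] /andP[qx _].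
by move: (lt_le_trans xq qx); rewrite ltxx.
Qed.

Lemma integrable_itv_setU (h : R -> R) : measurable_fun setT h ->
  mu.-integrable `[p, q[ (EFin \o h) -> mu.-integrable `[q, r[ (EFin \o h) ->
  mu.-integrable `[p, r[ (EFin \o h).
Proof.
move=> mh /integrableP[_ ih1] /integrableP[_ ih2]; apply/integrableP; split.
  exact/measurable_EFinP/measurable_funTS.
rewrite itv_setU ge0_integral_setU //; first exact: lte_add_pinfty.
exact/measurable_funTS/measurable_EFinP/measurableT_comp.
Qed.

Lemma Rintegral_itv_setU (h : R -> R) : mu.-integrable `[p, r[ (EFin \o h) ->
  Rintegral mu `[p, r[ h = Rintegral mu `[p, q[ h + Rintegral mu `[q, r[ h.
Proof. by move=> ih; rewrite itv_setU Rintegral_setU // -itv_setU. Qed.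

End interval_additivity.

(* The contributions of even n (n |-> n/2) and of odd n (n |-> (3n+1)/2) to
   [collatzT], for a real component [g] of f and a real component [c] of
   the factor e^{i pi x}. *)
Definition even_branch (R : realType) (g : R -> R) (x : R) : R :=
  g (x / 2) + g ((x + 1) / 2).

Definition odd_branch (R : realType) (c g : R -> R) (x : R) : R :=
  c (pi * x) * g (3 * x / 2) - c (pi * x) * g ((3 * x + 1) / 2).

Section periodic.
Context {R : realType}.
Local Notation mu := (@lebesgue_measure R).
Variable g : R -> R.
Hypotheses (g_periodic : forall x, g (x + 1) = g x)
  (g_measurable : measurable_fun setT g)
  (g_integrable : mu.-integrable `[0, 1[ (EFin \o g)).

Lemma integrable_periodic_itv (p q : R) : 0 <= p -> q <= 2 ->
  mu.-integrable `[p, q[ (EFin \o g).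
Proof.
move=> p_ge0 q_le2.
have g_integrable12 : mu.-integrable `[1, 2[ (EFin \o g).
  have := integrable_affine_itv (b := -1) (c := 1) (d := 2) (p := 0) (q := 1) ltr01
    ltac:(ring) ltac:(ring) g_measurable g_integrable.
  by apply: eq_integrable => //= x _; rewrite mul1r -[in RHS](subrK 1 x) g_periodic.
have := integrable_itv_setU ler01 (ler1n _ 2) g_measurable g_integrable g_integrable12.
by apply: integrableS => //; apply: subset_itv; rewrite bnd_simp.
Qed.

Lemma integrable_periodic_affine (a b : R) : 0 < a -> 0 <= b -> a + b <= 2 ->
  mu.-integrable `[0, 1[ (EFin \o (fun x => g (a * x + b))).
Proof.
move=> a_gt0 b_ge0 ab_le2.
apply: (integrable_affine_itv a_gt0 (p := b) (q := a + b)) => //; try ring.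
exact: integrable_periodic_itv.
Qed.

Let integrable_even_halves :
  mu.-integrable `[0, 1[ (EFin \o (fun x => g (x / 2))) /\
  mu.-integrable `[0, 1[ (EFin \o (fun x => g ((x + 1) / 2))).
Proof.
have half_gt0 : (0 : R) < 2^-1 by rewrite invr_gt0.
split.
  have := integrable_periodic_affine half_gt0 (lexx 0) ltac:(lra).
  by apply: eq_integrable => //= x _; rewrite addr0 mulrC.
have := integrable_periodic_affine half_gt0 (ltW half_gt0) ltac:(lra).
by apply: eq_integrable => //= x _; rewrite mulrDl mul1r mulrC.
Qed.

Lemma integrable_even_branch : mu.-integrable `[0, 1[ (EFin \o even_branch g).
Proof.
have [ih1 ih2] := integrable_even_halves.
exact: (integrableD_EFin _ ih1 ih2).
Qed.

Lemma Rintegral_even_branch :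
  Rintegral mu `[0, 1[ (even_branch g) = 2 * Rintegral mu `[0, 1[ g.
Proof.
have [ih1 ih2] := integrable_even_halves.
have half_gt0 : (0 : R) < 2^-1 by rewrite invr_gt0.
have lower : Rintegral mu `[0, 2^-1[ g = 2^-1 * Rintegral mu `[0, 1[ (fun x => g (x / 2)).
  rewrite (Rintegral_affine_itv half_gt0 (b := 0) (c := 0) (d := 1)) //;
    [|ring|ring|by apply: integrable_periodic_itv; lra].
  by congr (_ * _); apply: eq_Rintegral => x _; rewrite addr0 mulrC.
have upper :
    Rintegral mu `[2^-1, 1[ g = 2^-1 * Rintegral mu `[0, 1[ (fun x => g ((x + 1) / 2)).
  rewrite (Rintegral_affine_itv half_gt0 (b := 2^-1) (c := 0) (d := 1)) //;
    [|lra|lra|by apply: integrable_periodic_itv; lra].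
  by congr (_ * _); apply: eq_Rintegral => x _; rewrite mulrDl mul1r mulrC.
rewrite /even_branch RintegralD // [in RHS](Rintegral_itv_setU (q := 2^-1)) //; lra.
Qed.

Section odd_branch.
Variable c : R -> R.
Hypotheses (c_measurable : measurable_fun setT c) (c_bounded : forall y, `|c y| <= 1).

Let integrable_odd_halves :
  mu.-integrable `[0, 1[ (EFin \o (fun x => c (pi * x) * g (3 * x / 2))) /\
  mu.-integrable `[0, 1[ (EFin \o (fun x => c (pi * x) * g ((3 * x + 1) / 2))).
Proof.
have three_half_gt0 : (0 : R) < 3 / 2 by lra.
have mcpi : measurable_fun setT (fun x => c (pi * x)).
  exact: measurableT_comp c_measurable (measurable_funM _ _).
split; apply: integrableM_le1 => //; try exact: measurable_funTS.
  have := integrable_periodic_affine three_half_gt0 (lexx 0) ltac:(lra).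
  by apply: eq_integrable => //= x _; rewrite addr0 mulrAC.
have := integrable_periodic_affine three_half_gt0 (b := 2^-1) ltac:(lra) ltac:(lra).
by apply: eq_integrable => //= x _; congr (g _)%:E; field.
Qed.

Lemma integrable_odd_branch : mu.-integrable `[0, 1[ (EFin \o odd_branch c g).
Proof. by have [ih1 ih2] := integrable_odd_halves; exact: (integrableB_EFin _ ih1 ih2). Qed.

Hypothesis c_pi3 : forall y, c (y - pi / 3) + c (y + pi / 3) = c y.

(* The odd branch after the substitution y = 3x/2 (or y = (3x+1)/2). *)
Let W (beta : R) (x : R) : R := c (2 * pi / 3 * x + beta) * g x.

Let measurable_W beta : measurable_fun setT (W beta).
Proof.
apply: measurable_funM => //.
exact: measurableT_comp c_measurable (measurable_fun_affine _ _).
Qed.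

Let integrable_W beta p q : 0 <= p -> q <= 2 -> mu.-integrable `[p, q[ (EFin \o W beta).
Proof.
move=> p_ge0 q_le2.
apply: integrableM_le1 => //.
- by apply: measurable_funTS; exact: measurableT_comp c_measurable (measurable_fun_affine _ _).
- exact: integrable_periodic_itv.
Qed.

Let Rintegral_W_shift beta p q p' q' : p' = p + 1 -> q' = q + 1 ->
  0 <= p -> q <= 1 ->
  Rintegral mu `[p', q'[ (W beta) = Rintegral mu `[p, q[ (W (beta + 2 * pi / 3)).
Proof.
move=> p'E q'E p_ge0 q_le1.
rewrite (Rintegral_affine_itv ltr01 (b := 1) (c := p) (d := q) (p := p') (q := q')) //;
  [|by rewrite mul1r|by rewrite mul1r|by apply: integrable_W; rewrite ?p'E ?q'E; lra].
rewrite mul1r; apply: eq_Rintegral => x _; rewrite /W mul1r g_periodic.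
by congr (c _ * _); ring.
Qed.

Let W_add_period x : W 0 x + W (0 + 2 * pi / 3) x = W (pi / 3) x.
Proof.
rewrite /W -mulrDl -[c (_ + pi / 3)]c_pi3; congr ((c _ + c _) * _); ring.
Qed.

Let W_add_pi3 x : W (- (pi / 3)) x + W (pi / 3) x = W 0 x.
Proof. by rewrite /W -mulrDl -[c (_ + 0)]c_pi3; congr ((c _ + c _) * _); ring. Qed.

Let Rintegral_W_fold_lower : Rintegral mu `[0, 3 / 2[ (W 0) =
  Rintegral mu `[0, 2^-1[ (W (pi / 3)) + Rintegral mu `[2^-1, 1[ (W 0).
Proof.
rewrite (Rintegral_itv_setU (q := 2^-1)); [|lra|lra|apply: integrable_W; lra].
rewrite (Rintegral_itv_setU (p := 2^-1) (q := 1)); [|lra|lra|apply: integrable_W; lra].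
rewrite (@Rintegral_W_shift 0 0 (2^-1) 1 (3 / 2)); [|lra|lra|lra|lra].
rewrite addrCA -RintegralD; [|done|apply: integrable_W; lra|apply: integrable_W; lra].
rewrite addrC.
by congr (_ + _); apply: eq_Rintegral => x _; exact: W_add_period.
Qed.

Let Rintegral_W_fold_upper : Rintegral mu `[2^-1, 2[ (W (- (pi / 3))) =
  Rintegral mu `[0, 2^-1[ (W (pi / 3)) + Rintegral mu `[2^-1, 1[ (W 0).
Proof.
rewrite (Rintegral_itv_setU (p := 2^-1) (q := 1)); [|lra|lra|apply: integrable_W; lra].
rewrite (Rintegral_itv_setU (p := 1) (q := 3 / 2)); [|lra|lra|apply: integrable_W; lra].
rewrite (@Rintegral_W_shift _ 0 (2^-1) 1 (3 / 2)); [|lra|lra|lra|lra].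
rewrite (@Rintegral_W_shift _ (2^-1) 1 (3 / 2) 2); [|lra|lra|lra|lra].
have -> : - (pi / 3) + 2 * pi / 3 = pi / 3 :> R by field.
rewrite addrCA -RintegralD //; [|apply: integrable_W; lra|apply: integrable_W; lra].
by congr (_ + _); apply: eq_Rintegral => x _; exact: W_add_pi3.
Qed.

Lemma Rintegral_odd_branch : Rintegral mu `[0, 1[ (odd_branch c g) = 0.
Proof.
have three_half_gt0 : (0 : R) < 3 / 2 by lra.
have lower : Rintegral mu `[0, 3 / 2[ (W 0) =
    3 / 2 * Rintegral mu `[0, 1[ (fun x => c (pi * x) * g (3 * x / 2)).
  rewrite (Rintegral_affine_itv three_half_gt0 (b := 0) (c := 0) (d := 1)) //;
    [|ring|ring|apply: integrable_W; lra].
  by congr (_ * _); apply: eq_Rintegral => x _; rewrite /W; congr (c _ * g _); field.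
have upper : Rintegral mu `[2^-1, 2[ (W (- (pi / 3))) =
    3 / 2 * Rintegral mu `[0, 1[ (fun x => c (pi * x) * g ((3 * x + 1) / 2)).
  rewrite (Rintegral_affine_itv three_half_gt0 (b := 2^-1) (c := 0) (d := 1)) //;
    [|lra|lra|apply: integrable_W; lra].
  by congr (_ * _); apply: eq_Rintegral => x _; rewrite /W; congr (c _ * g _); field.
have [ih1 ih2] := integrable_odd_halves.
rewrite /odd_branch RintegralB //.
apply: (mulfI (_ : 3 / 2 != 0)); first lra.
by rewrite mulr0 mulrBr -lower -upper Rintegral_W_fold_lower Rintegral_W_fold_upper subrr.
Qed.

End odd_branch.

End periodic.

Definition periodic_integrable (R : realType) (g : R -> R) : Prop :=
  [/\ forall x, g (x + 1) = g x, measurable_fun setT g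
    & (@lebesgue_measure R).-integrable `[0, 1[ (EFin \o g)].

Definition odd_branch_weight (R : realType) (c : R -> R) : Prop :=
  [/\ measurable_fun setT c, forall y, `|c y| <= 1
    & forall y, c (y - pi / 3) + c (y + pi / 3) = c y].

Section weights.
Context {R : realType}.

Lemma cos_pi3 : cos (pi / 3 : R) = 2^-1.
Proof.
have pi_gt0 := @pi_gt0 R.
have cos_gt0 : 0 < cos (pi / 3 : R) by apply: cos_gt0_pihalf; apply/andP; split; lra.
have cos_2pi3 : cos (pi - pi / 3 : R) = - cos (pi / 3).
  by rewrite cosB cospi sinpi; ring.
have : cos (pi - pi / 3 : R) = 2 * cos (pi / 3) ^+ 2 - 1.
  by rewrite [pi - _](_ : _ = pi / 3 + pi / 3); [rewrite cosD -!expr2 sin2cos2; ring|field].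
rewrite cos_2pi3; move: cos_gt0; set x := cos (pi / 3) => x_gt0 x_eq.
have /eqP : (2 * x - 1) * (x + 1) = 0 by nra.
by rewrite mulf_eq0 => /orP[|] /eqP; lra.
Qed.

Lemma odd_branch_weight_cos : odd_branch_weight (@cos R).
Proof.
split; [exact: continuous_measurable_fun (@continuous_cos R)|exact: cos_max|].
by move=> y; rewrite cosB cosD cos_pi3; field.
Qed.

Lemma odd_branch_weight_sin : odd_branch_weight (@sin R).
Proof.
split; [exact: continuous_measurable_fun (@continuous_sin R)|exact: sin_max|].
by move=> y; rewrite sinB sinD cos_pi3; field.
Qed.

Lemma odd_branch_weightN (c : R -> R) :
  odd_branch_weight c -> odd_branch_weight (fun y => - c y).
Proof.
case=> mc c_le1 c_pi3; split => [|y|y]; last by rewrite -opprD c_pi3.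
- exact: measurableT_comp.
- by rewrite normrN.
Qed.

End weights.

Lemma Rintegral_collatz_component (R : realType) (u v c1 c2 : R -> R) :
  periodic_integrable u -> periodic_integrable v ->
  odd_branch_weight c1 -> odd_branch_weight c2 ->
  Rintegral (@lebesgue_measure R) `[0, 1[
    (fun x => 2^-1 * (even_branch u x + (odd_branch c1 u x + odd_branch c2 v x))) =
  Rintegral (@lebesgue_measure R) `[0, 1[ u.
Proof.
move=> [uP um iu] [vP vm iv] [mc1 c1_le1 c1_pi3] [mc2 c2_le1 c2_pi3].
have iodd1 := integrable_odd_branch uP um iu mc1 c1_le1.
have iodd2 := integrable_odd_branch vP vm iv mc2 c2_le1.
have m01 : @measurable _ (measurableTypeR R) `[0, 1[%classic by exact: measurable_itv.
have iodd := integrableD_EFin m01 iodd1 iodd2.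
have ieven := integrable_even_branch uP um iu.
rewrite RintegralZl //; last exact: eq_integrable (integrableD_EFin m01 ieven iodd).
rewrite RintegralD // RintegralD // Rintegral_even_branch // !Rintegral_odd_branch //.
by rewrite !addr0 mulrA mulVf ?mul1r.
Qed.

Lemma Re_collatzT (R : realType) (f : R -> R[i]) (x : R) :
  complex.Re (collatzT f x) =
  2^-1 * (even_branch (fun y => complex.Re (f y)) x +
    (odd_branch cos (fun y => complex.Re (f y)) x +
     odd_branch (fun y => - sin y) (fun y => complex.Im (f y)) x)).
Proof.
rewrite /collatzT /cexpi /even_branch /odd_branch.
case: (f (x / 2)) (f ((x + 1) / 2)) (f (3 * x / 2)) (f ((3 * x + 1) / 2)) => [? ?] [? ?] [? ?] [? ?].
by rewrite /=; ring.
Qed.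

Lemma Im_collatzT (R : realType) (f : R -> R[i]) (x : R) :
  complex.Im (collatzT f x) =
  2^-1 * (even_branch (fun y => complex.Im (f y)) x +
    (odd_branch cos (fun y => complex.Im (f y)) x +
     odd_branch sin (fun y => complex.Re (f y)) x)).
Proof.
rewrite /collatzT /cexpi /even_branch /odd_branch.
case: (f (x / 2)) (f ((x + 1) / 2)) (f (3 * x / 2)) (f ((3 * x + 1) / 2)) => [? ?] [? ?] [? ?] [? ?].
by rewrite /=; ring.
Qed.

Lemma L2_circle_periodic_integrable (R : realType) (f : R -> R[i]) :
  L2_circle f ->
  periodic_integrable (fun y => complex.Re (f y)) /\
  periodic_integrable (fun y => complex.Im (f y)).
Proof.
case=> f_periodic [mRe [mIm i2]].
have m01 : @measurable _ (measurableTypeR R) `[0, 1[%classic by exact: measurable_itv.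
have finite01 : (@lebesgue_measure R `[0%R, 1%R[ < +oo)%E.
  by rewrite lebesgue_measure_itv /= lte_fin ltr01 -EFinD ltry.
split; split => [x|//|]; rewrite ?f_periodic //.
- apply: (integrable_sqr_le m01 finite01 (measurable_funTS mRe) i2) => x _.
  by rewrite lerDl sqr_ge0.
- apply: (integrable_sqr_le m01 finite01 (measurable_funTS mIm) i2) => x _.
  by rewrite lerDr sqr_ge0.
Qed.

Theorem mainTheorem5 (R : realType) (f : R -> R[i]) :
  L2_circle f -> circle_integral (collatzT f) = circle_integral f.
Proof.
move=> /L2_circle_periodic_integrable[iRe iIm]; rewrite /circle_integral; congr Complex.
- under eq_Rintegral do rewrite Re_collatzT.
  apply: Rintegral_collatz_component iRe iIm odd_branch_weight_cos _.
  exact: odd_branch_weightN odd_branch_weight_sin.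
- under eq_Rintegral do rewrite Im_collatzT.
  exact: Rintegral_collatz_component iIm iRe odd_branch_weight_cos odd_branch_weight_sin.
Qed.
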